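(* Let $k\ge 4$ and let $w$ be a minimal uncompletable word for $S_k$. Let $p$ and $q$ be two consecutive occurrences of $v=b^{k-1}a$ in $w$ ($p$ before $q$), with sets of forbidden local positions $F_p$ and $F_q$. If $F_q=\{0,i,i+1,\dots,k-2\}$ for some $1\le i\le k-2$, then $|F_p|<|F_q|$.
   Context: $\Sigma=\{a,b\}$. $S_k=\left(\Sigma^k\setminus\{ba^{k-1},b^{k-1}a\}\right)\cup\left(\Sigma^{k-1}\setminus\{a^{k-1},b^{k-1}\}\right)$, $u=ba^{k-1}$, $v=b^{k-1}a$. $\mathit{Fact}(S^* )$ and $\mathit{Pref}(S^* )$ are the sets of factors and of prefixes of words in $S^*$. A word $w\notin\mathit{Fact}(S_k^* )$ is uncompletable; a minimal uncompletable word is one of minimal length. For $w=w_1\cdots w_n$, $w[i..j]=w_i\cdots w_j$ (empty if $i>j$). A position $j$, $0\le j\le n-1$, is forbidden in $w$ if $w[j+1..n]\notin\mathit{Pref}(S_k^* )$. An occurrence of $p\in\{u,v\}$ in $w$ is an index $s$ with $w[s+1..s+k]=p$; local position $i\in\{0,\dots,k-1\}$ is the position $s+i$ of $w$, and it is forbidden in the occurrence if $s+i$ is forbidden in $w$. Two occurrences of words from $\{u,v\}$ starting at $s<t$ overlap if $t<s+k$; they are consecutive if either they overlap or they are the only occurrences of $u$ or $v$ lying inside the factor $w[s+1..t+k]$. *)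

From mathcomp Require Import all_boot.
Set Implicit Arguments. Unset Strict Implicit. Unset Printing Implicit Defensive.

Definition word := seq bool.
Definition la : bool := false.
Definition lb : bool := true.

Definition u (k : nat) : word := lb :: nseq k.-1 la.
Definition v (k : nat) : word := rcons (nseq k.-1 lb) la.

Definition inS (k : nat) (x : word) : bool :=
  ((size x == k) && (x != u k) && (x != v k))
  || ((size x == k.-1) && (x != nseq k.-1 la) && (x != nseq k.-1 lb)).

Definition inSstar (k : nat) (x : word) : Prop :=
  exists ws : seq word, all (inS k) ws /\ flatten ws = x.

Definition isFact (k : nat) (w : word) : Prop :=
  exists x y : word, inSstar k (x ++ w ++ y).
Definition isPref (k : nat) (w : word) : Prop :=
  exists y : word, inSstar k (w ++ y).

Definition uncompletable (k : nat) (w : word) : Prop := ~ isFact k w.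

Definition min_uncompletable (k : nat) (w : word) : Prop :=
  uncompletable k w /\ forall w' : word, uncompletable k w' -> size w <= size w'.

(* position j (0 <= j <= n-1) is forbidden in w if w[j+1..n] = drop j w
   is not in Pref(S_k-star) *)
Definition forbidden (k : nat) (w : word) (j : nat) : Prop :=
  j < size w /\ ~ isPref k (drop j w).

(* occurrence of p (of length k) at index s: w[s+1..s+k] = p *)
Definition occurs_at (k : nat) (p w : word) (s : nat) : Prop :=
  s + k <= size w /\ take k (drop s w) = p.

Definition occ_uv (k : nat) (w : word) (s : nat) : Prop :=
  occurs_at k (u k) w s \/ occurs_at k (v k) w s.

Definition consecutive (k : nat) (w : word) (s t : nat) : Prop :=
  s < t /\
  (t < s + k \/
   forall r, s <= r -> r + k <= t + k -> occ_uv k w r -> r = s \/ r = t).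

(* Let [p] and [q] be the occurrences of [v] at [s] and [t]. As no occurrence of [u] or [v]
   starts strictly between them, every factor of length [k] starting strictly between [p] and
   [q] is a block of [S_k], and so is every factor of length [k - 1] starting inside [p] after
   its first letter (it contains both letters, since [u] does not occur at [s + k - 2]).
   Chaining such blocks, a non-forbidden local position [j] of [q] makes the local positions
   [(j + t - s) mod k] and [(j + 1 + t - s) mod k] of [p] non-forbidden, unless they are 0.
   Counting through the injective shift by [t - s], [p] gets at least one more non-forbidden
   position than [q] when [i > 1]. When [i = 1] the count needs [k] to divide neither [t - s]
   nor [t - s - 1]; otherwise the factor of [w] from [s] (resp. [s + 2]) up to [t] could be
   deleted, keeping [w] uncompletable and contradicting its minimality. *)

From mathcomp Require Import all_boot zify.
From Stdlib Require Import Classical.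
Set Implicit Arguments. Unset Strict Implicit. Unset Printing Implicit Defensive.

Lemma inS_size k c : inS k c -> k.-1 <= size c <= k.
Proof. by case/orP => /andP [/andP [/eqP -> _] _]; lia. Qed.

Lemma isPref_inS_cat k c z : inS k c -> isPref k z -> isPref k (c ++ z).
Proof.
move=> Sc [y [ws [Sws def]]]; exists y, (c :: ws).
by split; rewrite /= ?Sc ?Sws // def catA.
Qed.

Lemma isPref_drop_inS k (w : word) r n :
  inS k (take n (drop r w)) -> isPref k (drop (r + n) w) -> isPref k (drop r w).
Proof.
move=> Sc; rewrite -[drop r w](cat_take_drop n) drop_drop [n + r]addnC.
exact: isPref_inS_cat.
Qed.

Lemma nth_take_drop (w : word) r n j :
  j < n -> nth false (take n (drop r w)) j = nth false w (r + j).
Proof. by move=> lt_jn; rewrite nth_take // nth_drop. Qed.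

Lemma nth_mem_take_drop (w : word) r n j : j < n -> r + n <= size w ->
  nth false w (r + j) \in take n (drop r w).
Proof.
move=> lt_jn fits; have le_n : n <= size (drop r w) by rewrite size_drop; lia.
by rewrite -(nth_take_drop _ _ lt_jn) mem_nth // size_takel.
Qed.

Lemma flatten_inS_split k ws A B : 0 < k -> all (inS k) ws -> flatten ws = A ++ B ->
  exists ws1 ws2 b, [/\ all (inS k) ws1, all (inS k) ws2, A = flatten ws1 ++ b,
     flatten ws2 = b ++ B & size b < k].
Proof.
move=> k_gt0; elim: ws A => [|c ws IHws] A /=.
  by case: A => [|? ?] // _; case: B => [|? ?] // _; exists [::], [::], [::].
case/andP=> Sc Sws def.
have [le_cA|lt_Ac] := leqP (size c) (size A); last first.
  exists [::], (c :: ws), A; split=> //=; first by rewrite Sc.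
  by have := inS_size Sc; lia.
move: def; rewrite -[A](cat_take_drop (size c)) -catA => /eqP.
rewrite eqseq_cat ?size_takel // => /andP [/eqP def_c /eqP /(IHws _ Sws)].
case=> ws1 [ws2 [b [Sws1 Sws2 def_A def_B lt_bk]]].
exists (c :: ws1), ws2, b; split=> //=; first by rewrite Sc.
by rewrite def_A -def_c catA.
Qed.

Lemma uncompletable_cut k w x y : 0 < k -> uncompletable k w ->
  (forall b, size b < k -> isPref k (b ++ drop y w) -> isPref k (b ++ drop x w)) ->
  uncompletable k (take x w ++ drop y w).
Proof.
move=> k_gt0 unc_w cut_ok [X [Y [ws [Sws def]]]].
have := @flatten_inS_split k ws (X ++ take x w) (drop y w ++ Y) k_gt0 Sws.
rewrite def -!catA => /(_ erefl) [ws1 [ws2 [b [Sws1 Sws2 def_A def_B lt_bk]]]].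
have [|Y' [ws3 [Sws3 def3]]] := cut_ok b lt_bk.
  by exists Y, ws2; rewrite def_B catA.
apply: unc_w; exists X, Y', (ws1 ++ ws3); split; first by rewrite all_cat Sws1 Sws3.
by rewrite flatten_cat def3 -[in RHS](cat_take_drop x w) !catA def_A.
Qed.

Lemma min_uncompletable_cut k w x y : 0 < k -> min_uncompletable k w -> x < y <= size w ->
  ~ (forall b, size b < k -> isPref k (b ++ drop y w) -> isPref k (b ++ drop x w)).
Proof.
move=> k_gt0 [unc_w min_w] lt_xy cut_ok.
have := min_w _ (uncompletable_cut k_gt0 unc_w cut_ok).
by rewrite size_cat size_drop size_takel; lia.
Qed.

Lemma nth_v k j : nth false (v k) j = (j < k.-1).
Proof. by rewrite /v nth_rcons size_nseq nth_nseq; case: ltngtP. Qed.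

Lemma occurs_v_lb k w r j : occurs_at k (v k) w r -> j < k.-1 -> nth false w (r + j) = lb.
Proof. by case=> _ def lt_j; rewrite -(@nth_take_drop w r k) ?def ?nth_v //; lia. Qed.

Lemma occurs_v_la k w r : 0 < k -> occurs_at k (v k) w r -> nth false w (r + k.-1) = la.
Proof. by move=> k_gt0 [_ def]; rewrite -(@nth_take_drop w r k) ?def ?nth_v ?ltnn //; lia. Qed.

Lemma take_v k : take k.-1 (v k) = nseq k.-1 lb.
Proof. by rewrite /v -cats1 take_size_cat ?size_nseq. Qed.

Lemma occurs_v_take k w r : occurs_at k (v k) w r -> take k.-1 (drop r w) = nseq k.-1 lb.
Proof. by case=> _ def; rewrite -(take_takel _ (leq_pred k)) def take_v. Qed.

Lemma v_notin_S k : 0 < k -> ~~ inS k (v k).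
Proof. by move=> k_gt0; rewrite /inS eqxx !andbF /= size_rcons size_nseq; lia. Qed.

Lemma nseq_lb_notin_S k : 0 < k -> ~~ inS k (nseq k.-1 lb).
Proof. by move=> k_gt0; rewrite /inS eqxx !andbF orbF size_nseq; lia. Qed.

Lemma inS_short_mixed k x : 0 < k -> size x = k.-1 -> la \in x -> lb \in x -> inS k x.
Proof.
move=> k_gt0 size_x x_la x_lb; rewrite /inS size_x eqxx /=; apply/orP; right.
by apply/andP; split; apply/negP => /eqP def_x;
  [move: x_lb | move: x_la]; rewrite def_x mem_nseq andbC.
Qed.

Lemma inS_cons_nseq_lb k c : 1 < k -> inS k (c :: nseq k.-1 lb).
Proof.
case: k => [|[|k]] // _; rewrite /inS /= size_nseq eqxx /=; apply/orP; left.
apply/andP; split; apply/eqP; first by move/(congr1 (nth false ^~ 1)).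
move/(congr1 (nth false ^~ k.+1)); rewrite nth_v ltnn.
by rewrite -[nth _ _ k.+1]/(nth false (nseq k.+1 lb) k) nth_nseq ltnSn.
Qed.

Lemma prefix_before_v_size k w t b : 1 < k -> occurs_at k (v k) w t ->
  (forall j, j < k.-1 -> ~ isPref k (drop (t + j) w)) ->
  size b < k -> isPref k (b ++ drop t w) -> size b = 1.
Proof.
move=> k_gt1 occ_t forb lt_bk [Y [[|c ws] [/= Sws def]]]; have [fits occ] := occ_t.
  by move/(congr1 size): def; rewrite !size_cat size_drop /=; lia.
case/andP: Sws => Sc Sws; have /andP [ge_c le_c] := inS_size Sc.
move def_m : (size c - size b) => m.
move: def; rewrite -[drop t w](cat_take_drop m) -!catA catA => /eqP.
have size_c : size b + m = size c by lia.
have le_m : m <= size (drop t w) by rewrite size_drop; lia.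
rewrite eqseq_cat; last by rewrite size_cat (size_takel le_m) size_c.
case/andP => /eqP def_c /eqP def_rest.
have ge_m : k.-1 <= m.
  rewrite leqNgt; apply/negP => lt_m; apply: (forb m lt_m).
  by exists Y, ws; rewrite def_rest drop_drop addnC.
have [/size0nil b0|] := posnP (size b); last lia.
move: Sc; rewrite def_c b0 /=; have [->|->] : m = k.-1 \/ m = k by lia.
  by rewrite (occurs_v_take occ_t) => S_f; case/negP: (nseq_lb_notin_S (ltnW k_gt1)).
by rewrite occ => S_f; case/negP: (v_notin_S (ltnW k_gt1)).
Qed.

Section ConsecutiveOccurrences.
Variables (k : nat) (w : word) (s t : nat).
Hypothesis k_gt2 : 2 < k.
Hypothesis occ_s : occurs_at k (v k) w s.
Hypothesis occ_t : occurs_at k (v k) w t.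
Hypothesis cons_st : consecutive k w s t.

Local Notation completable_from x := (isPref k (drop x w)).

Let k_gt0 : 0 < k. Proof. exact: ltnW (ltnW k_gt2). Qed.

Lemma size_w_ge : t + k <= size w. Proof. by case: occ_t. Qed.

Lemma occurrences_disjoint : s + k <= t.
Proof.
case: cons_st => lt_st _; rewrite leqNgt; apply/negP => overlap.
have := occurs_v_la k_gt0 occ_s.
by rewrite (_ : s + k.-1 = t + (s + k.-1 - t)) ?(occurs_v_lb occ_t) //; lia.
Qed.

Lemma no_occurrence_between r : s < r < t -> ~ occ_uv k w r.
Proof.
move=> /andP [lt_sr lt_rt] occ_r; have := occurrences_disjoint.
case: cons_st => _ [|only_st]; first by lia.
by have := only_st r (ltnW lt_sr) _ occ_r; lia.
Qed.

Lemma completable_step r : s < r < t -> completable_from (r + k) -> completable_from r.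
Proof.
move=> r_between; apply: isPref_drop_inS.
have size_f : size (take k (drop r w)) = k.
  by rewrite size_takel // size_drop; have := size_w_ge; lia.
rewrite /inS size_f eqxx /=; apply/orP; left.
have not_occ := no_occurrence_between r_between.
have fits : r + k <= size w by have := size_w_ge; lia.
by apply/andP; split; apply/eqP => def; apply: not_occ; [left | right]; split.
Qed.

Lemma completable_shift y z : s < y -> y <= z <= t + k.-1 -> k %| z - y ->
  completable_from z -> completable_from y.
Proof.
move=> lt_sy /andP [le_yz le_z] /dvdnP [n].
elim: n y lt_sy le_yz => [|n IHn] y lt_sy le_yz def.
  by have -> : y = z by lia.
move=> from_z; apply: completable_step; first by rewrite mulSn in def; lia.
by apply: IHn => //; rewrite mulSn in def; lia.
Qed.

(* Otherwise [u] would occur at [s + k - 2], between [p] and [q]. *)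
Lemma lb_after_occurrence : lb \in take k.-1 (drop (s + k.-1) w).
Proof.
have fits := size_w_ge; have disj := occurrences_disjoint.
apply/negPn/negP => no_lb; apply: (@no_occurrence_between (s + k.-2)); first lia.
left; split; first lia.
rewrite (drop_nth false); last lia.
rewrite -[k in take k _](prednK k_gt0) /= (occurs_v_lb occ_s); last lia.
rewrite (_ : (s + k.-2).+1 = s + k.-1); last lia.
have size_f : size (take k.-1 (drop (s + k.-1) w)) = k.-1.
  by rewrite size_takel // size_drop; lia.
rewrite /u -[in nseq _ _]size_f; congr (_ :: _).
by apply/all_pred1P/allP => -[] // lb_in; case/negP: no_lb.
Qed.

Lemma completable_step_pred x : s < x <= s + k.-1 ->
  completable_from (x + k.-1) -> completable_from x.
Proof.
move=> x_range; apply: isPref_drop_inS.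
have fits := size_w_ge; have disj := occurrences_disjoint.
have size_f : size (take k.-1 (drop x w)) = k.-1 by rewrite size_takel // size_drop; lia.
apply: (inS_short_mixed k_gt0 size_f).
  rewrite -(occurs_v_la k_gt0 occ_s) (_ : s + k.-1 = x + (s + k.-1 - x)); last lia.
  by apply: nth_mem_take_drop; lia.
have [lt_x|ge_x] := ltnP x (s + k.-1); last first.
  by rewrite (_ : x = s + k.-1); [exact: lb_after_occurrence | lia].
rewrite -(occurs_v_lb occ_s (_ : x - s < k.-1)); last lia.
by rewrite (_ : s + (x - s) = x + 0); [apply: nth_mem_take_drop | ]; lia.
Qed.

Lemma completable_shift_mod j r : j < k -> 0 < r < k -> j + (t - s) = r %[mod k] ->
  completable_from (t + j) -> completable_from (s + r).
Proof.
move=> lt_jk r_range eq_r from_tj; have disj := occurrences_disjoint.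
apply: (completable_shift _ _ _ from_tj); [lia | lia |].
rewrite (_ : t + j - (s + r) = j + (t - s) - r); last lia.
by rewrite -eqn_mod_dvd ?eq_r //; lia.
Qed.

Lemma completable_shift_mod_succ j r : j < k -> 0 < r < k -> j.+1 + (t - s) = r %[mod k] ->
  completable_from (t + j) -> completable_from (s + r).
Proof.
move=> lt_jk r_range eq_r from_tj; have disj := occurrences_disjoint.
have dvd_k : k %| j.+1 + (t - s) - r by rewrite -eqn_mod_dvd ?eq_r //; lia.
have le_k : k <= j.+1 + (t - s) - r by apply: dvdn_leq dvd_k; lia.
apply: completable_step_pred; first lia.
apply: (completable_shift _ _ _ from_tj); [lia | lia |].
rewrite (_ : t + j - (s + r + k.-1) = j.+1 + (t - s) - r - k); last lia.
by rewrite dvdn_sub ?dvdnn.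
Qed.

Variables Fp Fq : {set 'I_k}.
Hypothesis Fp_def : forall j : 'I_k, j \in Fp <-> forbidden k w (s + j).
Hypothesis Fq_def : forall j : 'I_k, j \in Fq <-> forbidden k w (t + j).

Lemma completable_notin_Fq (j : 'I_k) : j \notin Fq -> completable_from (t + j).
Proof.
move=> /negP j_notin; apply: NNPP => not_pref; apply/j_notin/Fq_def.
by split=> //; have := size_w_ge; have := ltn_ord j; lia.
Qed.

Lemma notin_Fp_completable (j : 'I_k) : completable_from (s + j) -> j \notin Fp.
Proof. by move=> from_sj; apply/negP => /Fp_def []. Qed.

Definition shift_ord (j : 'I_k) : 'I_k := Ordinal (ltn_pmod (j + (t - s)) k_gt0).

Lemma shift_ord_inj : injective shift_ord.
Proof.
move=> j1 j2 /(congr1 val) /= /eqP; rewrite eqn_modDr !modn_small // => /eqP.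
exact: val_inj.
Qed.

(* The local positions of [q] that are not forbidden or follow, cyclically, one that is not:
   the shift by [t - s] maps them to non-forbidden positions of [p], except possibly 0. *)
Definition liftable : {set 'I_k} := [set a | (a \notin Fq) || (ord_pred a \notin Fq)].

Let o0 : 'I_k := Ordinal k_gt0.

Lemma shift_liftable_sub : shift_ord @: liftable \subset o0 |: ~: Fp.
Proof.
apply/subsetP => _ /imsetP [a a_in ->]; rewrite !inE.
have [//|ne0] := eqVneq (shift_ord a) o0; apply: notin_Fp_completable.
have r_range : 0 < shift_ord a < k.
  by rewrite ltn_ord andbT lt0n; apply: contra ne0 => /eqP z; apply/eqP/val_inj.
move: a_in; rewrite inE => /orP [a_notin | pa_notin].
  apply: (completable_shift_mod (ltn_ord a) r_range _ (completable_notin_Fq a_notin)).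
  by rewrite /= modn_mod.
apply: (completable_shift_mod_succ (ltn_ord _) r_range _ (completable_notin_Fq pa_notin)).
by rewrite /= modn_mod -[in RHS](ord_predK a) /= modnDml.
Qed.

Lemma card_liftable_le : #|liftable| <= #|~: Fp|.+1.
Proof.
rewrite -(card_imset _ shift_ord_inj) -add1n.
apply: leq_trans (subset_leq_card shift_liftable_sub) _.
by rewrite cardsU1 leq_add2r leq_b1.
Qed.

Lemma card_liftable_le_avoid : o0 \notin shift_ord @: liftable -> #|liftable| <= #|~: Fp|.
Proof.
move=> o0_notin; rewrite -(card_imset _ shift_ord_inj); apply: subset_leq_card.
apply/subsetP => a a_in; have := subsetP shift_liftable_sub a a_in.
by rewrite !inE; case: eqP a_in => // ->; rewrite (negbTE o0_notin).
Qed.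

Lemma card_liftable : #|liftable| = #|~: Fq| + #|[set a in Fq | ord_pred a \notin Fq]|.
Proof.
rewrite -(cardsID Fq liftable) addnC; congr (_ + _); apply: eq_card => a;
  by rewrite !inE; case: (a \in Fq); rewrite /= ?andbT ?andbF.
Qed.

Variable i : nat.
Hypothesis i_range : 1 <= i <= k - 2.
Hypothesis def_Fq : Fq = [set j : 'I_k | (val j == 0) || (i <= val j <= k - 2)].

Lemma mem_Fq (j : 'I_k) : (j \in Fq) = (val j == 0) || (i <= j <= k - 2).
Proof. by rewrite def_Fq inE. Qed.

Lemma card_liftable_ge : #|~: Fq| + (1 < i) < #|liftable|.
Proof.
rewrite card_liftable ltn_add2l.
have o0_in : o0 \in [set a in Fq | ord_pred a \notin Fq].
  by rewrite !inE !mem_Fq /= add0n modn_small; lia.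
have [lt_1i|_] := ltnP 1 i; last by apply/card_gt0P; exists o0.
have lt_ik : i < k by lia.
have oi_in : Ordinal lt_ik \in [set a in Fq | ord_pred a \notin Fq].
  by rewrite !inE !mem_Fq /= (_ : (i + k).-1 = i.-1 + k) ?modnDr ?modn_small; lia.
apply: leq_trans (subset_leq_card (_ : [set o0; Ordinal lt_ik] \subset _)); last first.
  by apply/subsetP => a /set2P [] ->.
by rewrite cards2; case: eqP => // /(congr1 val) /=; lia.
Qed.

Lemma completable_last : completable_from (t + k.-1).
Proof.
have lt_k : k.-1 < k by lia.
by apply: (completable_notin_Fq (j := Ordinal lt_k)); rewrite mem_Fq /=; lia.
Qed.

Section OnlyLastPositionFree.
Hypothesis i1 : i = 1.
Hypothesis min_w : min_uncompletable k w.

Lemma notin_Fq_last (j : 'I_k) : (j \notin Fq) = (j == k.-1 :> nat).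
Proof. by rewrite mem_Fq i1; case: j => j /= lt_jk; apply/idP/eqP; lia. Qed.

Lemma forbidden_before_last j : j < k.-1 -> ~ completable_from (t + j).
Proof.
move=> lt_j; have lt_jk : j < k by lia.
have : Ordinal lt_jk \in Fq by apply/negPn; rewrite notin_Fq_last /=; lia.
by case/Fq_def.
Qed.

(* Minimality of [w]: otherwise the factor [w[x+1..t]] could be cut out of [w]. *)
Lemma no_single_letter_cut x : x < t -> ~ (forall c, isPref k (c :: drop x w)).
Proof.
move=> lt_xt all_c; apply: (min_uncompletable_cut k_gt0 min_w (x := x) (y := t)).
  by have := size_w_ge; lia.
move=> b lt_bk pref_b.
have := prefix_before_v_size (ltnW k_gt2) occ_t forbidden_before_last lt_bk pref_b.
by case: b {lt_bk pref_b} => [|c [|]] // _; exact: all_c.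
Qed.

Lemma gap_not_dvd : ~~ (k %| t - s).
Proof.
apply/negP => dvd_gap; have disj := occurrences_disjoint.
have from_last : completable_from (s + k.-1).
  apply: (completable_shift _ _ _ completable_last); [lia | lia |].
  by rewrite (_ : t + k.-1 - (s + k.-1) = t - s) //; lia.
apply: (no_single_letter_cut (x := s)) => [|c]; first lia.
rewrite -[drop s w](cat_take_drop k.-1) drop_drop [k.-1 + s]addnC (occurs_v_take occ_s).
by rewrite -cat_cons; apply: isPref_inS_cat from_last; apply: inS_cons_nseq_lb; lia.
Qed.

Lemma gap_pred_not_dvd : 3 < k -> ~~ (k %| t - s - 1).
Proof.
move=> k_gt3; apply/negP => dvd_gap; have disj := occurrences_disjoint.
have from_end : completable_from (s + k).
  apply: (completable_shift _ _ _ completable_last); [lia | lia |].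
  by rewrite (_ : t + k.-1 - (s + k) = t - s - 1) //; lia.
apply: (no_single_letter_cut (x := s.+2)) => [|c]; first lia.
rewrite -[drop s.+2 w](cat_take_drop (k - 2)) drop_drop (_ : k - 2 + s.+2 = s + k); last lia.
rewrite -cat_cons; apply: isPref_inS_cat from_end.
have fits := size_w_ge.
apply: inS_short_mixed k_gt0 _ _ _.
- by rewrite /= size_takel ?size_drop; lia.
- rewrite inE -(occurs_v_la k_gt0 occ_s) (_ : s + k.-1 = s.+2 + (k - 3)); last lia.
  by rewrite nth_mem_take_drop ?orbT; lia.
- rewrite inE -(occurs_v_lb occ_s (_ : 2 < k.-1)); last lia.
  rewrite (_ : s + 2 = s.+2 + 0); last lia.
  by rewrite nth_mem_take_drop ?orbT; lia.
Qed.

Lemma o0_notin_shift_liftable : 3 < k -> o0 \notin shift_ord @: liftable.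
Proof.
move=> k_gt3; have disj := occurrences_disjoint.
apply/imsetP => -[a]; rewrite inE !notin_Fq_last => /orP [] /eqP a_last /(congr1 val) /=.
  rewrite a_last (_ : k.-1 + (t - s) = t - s - 1 + k) ?modnDr; last lia.
  by move=> /esym /eqP dvd; case/negP: (gap_pred_not_dvd k_gt3).
have a0 : val a = 0.
  move: (ord_pred a) a_last (ord_predK a) => p p_last <-.
  by rewrite /= p_last prednK // modnn.
by rewrite a0 add0n => /esym /eqP dvd; case/negP: gap_not_dvd.
Qed.

End OnlyLastPositionFree.

Lemma card_Fp_lt_card_Fq : 3 < k -> min_uncompletable k w -> #|Fp| < #|Fq|.
Proof.
move=> k_gt3 min_w.
suff : #|~: Fq| < #|~: Fp| by have := cardsC Fp; have := cardsC Fq; rewrite !card_ord; lia.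
have := card_liftable_ge; case: (ltnP 1 i) => [_|le_i1] /=; rewrite ?addn1 ?addn0 => lift_ge.
  by rewrite -ltnS; exact: leq_trans lift_ge card_liftable_le.
have i1 : i = 1 by lia.
exact: leq_trans lift_ge (card_liftable_le_avoid (o0_notin_shift_liftable i1 min_w k_gt3)).
Qed.

End ConsecutiveOccurrences.

Theorem lemma7 (k : nat) (w : word) (s t i : nat) (Fp Fq : {set 'I_k}) :
  4 <= k ->
  min_uncompletable k w ->
  occurs_at k (v k) w s ->
  occurs_at k (v k) w t ->
  consecutive k w s t ->
  (forall j : 'I_k, j \in Fp <-> forbidden k w (s + j)) ->
  (forall j : 'I_k, j \in Fq <-> forbidden k w (t + j)) ->
  1 <= i <= k - 2 ->
  Fq = [set j : 'I_k | (val j == 0) || (i <= val j <= k - 2)] ->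
  #|Fp| < #|Fq|.
Proof.
move=> k_ge4 min_w occ_s occ_t cons_st Fp_def Fq_def i_range def_Fq.
exact: (card_Fp_lt_card_Fq (ltnW k_ge4) occ_s occ_t cons_st Fp_def Fq_def
  i_range def_Fq k_ge4 min_w).
Qed.
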